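(* Let $n\ge 1$. The subuniverses of $\mathbf{P\L}_n$ are exactly the sets $$P_k=\{0,\tfrac{\ell}{n},\tfrac{2\ell}{n},\dots,\tfrac{(k-1)\ell}{n},1\}=\{\tfrac{i}{k}: 0\le i\le k\},$$ one for each factorization $n=k\cdot\ell$ with $k,\ell$ positive integers. Each such subalgebra is isomorphic to $\mathbf{P\L}_k$. Consequently the lattice of subalgebras of $\mathbf{P\L}_n$ is isomorphic to the lattice of positive divisors of $n$.
   Context: For $n\ge 1$, the $(n+1)$-element positive MV-chain is the algebra $\mathbf{P\L}_n=\langle\{0,\tfrac1n,\dots,\tfrac{n-1}{n},1\},\wedge,\vee,\odot,\oplus,0,1\rangle$. Here $\wedge=\min$, $\vee=\max$, $x\odot y=\max\{0,x+y-1\}$ and $x\oplus y=\min\{1,x+y\}$. It is the negation-free reduct of the finite MV-chain $\text{\L}_n$. *)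

From mathcomp Require Import all_boot.
Set Implicit Arguments. Unset Strict Implicit. Unset Printing Implicit Defensive.

(* The positive MV-chain PL_n, encoded on 'I_n.+1: the ordinal i stands for i/n.
   Operations (scaled by n):
     x /\ y = min, x \/ y = max,
     x (.) y = max(0, x + y - n)  (truncated subtraction),
     x (+) y = min(n, x + y),  0 = ord0,  1 = ord_max. *)
Section PL.
Variable n : nat.
Definition PL_meet (x y : 'I_n.+1) : 'I_n.+1 := inord (minn x y).
Definition PL_join (x y : 'I_n.+1) : 'I_n.+1 := inord (maxn x y).
Definition PL_odot (x y : 'I_n.+1) : 'I_n.+1 := inord ((x + y) - n).
Definition PL_oplus (x y : 'I_n.+1) : 'I_n.+1 := inord (minn n (x + y)).
Definition PL_zero : 'I_n.+1 := ord0.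
Definition PL_one : 'I_n.+1 := ord_max.

Definition PL_subuniverse (S : {set 'I_n.+1}) : Prop :=
  [/\ PL_zero \in S, PL_one \in S &
   forall x y, x \in S -> y \in S ->
     [/\ PL_meet x y \in S, PL_join x y \in S,
         PL_odot x y \in S & PL_oplus x y \in S]].

(* P_k = {0, l/n, 2l/n, ..., 1} with n = k * l, i.e. elements i/n with l | i *)
Definition Pk (k : nat) : {set 'I_n.+1} := [set i : 'I_n.+1 | (n %/ k) %| i].
End PL.

Definition PL_hom (m n : nat) (f : 'I_m.+1 -> 'I_n.+1) : Prop :=
  [/\ f (PL_zero m) = PL_zero n, f (PL_one m) = PL_one n &
   forall x y,
     [/\ f (PL_meet x y) = PL_meet (f x) (f y),
         f (PL_join x y) = PL_join (f x) (f y),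
         f (PL_odot x y) = PL_odot (f x) (f y) &
         f (PL_oplus x y) = PL_oplus (f x) (f y)]].

Definition PL_iso_onto (m n : nat) (f : 'I_m.+1 -> 'I_n.+1) (S : {set 'I_n.+1}) : Prop :=
  [/\ PL_hom f, injective f & forall y, y \in S <-> exists x, f x = y].

From mathcomp Require Import all_boot zify.

(* Elements of PL_n are encoded by their numerators 0..n, so a subset of PL_n
   is a set of numerators.  For a divisor l of n let [multiples n l] be the set
   of numerators divisible by l; the set P_k of the statement is
   [multiples n (n %/ k)].

   1. For l %| n, [multiples n l] is a subuniverse, and for n = k * l the map
      x |-> x * l is an isomorphism of PL_k onto it.
   2. Conversely let S be a subuniverse and l its least positive element.
      S contains all multiples of l up to n (closure under (+)).  Combining
      such multiples with (.) produces elements of S below l: first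
      l - n %% l, which shows l %| n, and then a %% l for every a in S.
      Minimality of l forces them to vanish, so S = [multiples n l].
   3. Inclusion of sets of multiples is reverse divisibility of the steps, and
      k |-> n %/ k reverses divisibility among divisors of n, so k |-> P_k is
      an order embedding. *)

Lemma val_inord n a : a <= n -> nat_of_ord (inord a : 'I_n.+1) = a.
Proof. by move=> a_le_n; rewrite inordK. Qed.

Section Operations.
Variable n : nat.
Implicit Types x y : 'I_n.+1.

Lemma val_PL_meet x y : PL_meet x y = minn x y :> nat.
Proof. by rewrite val_inord // geq_min leq_ord. Qed.

Lemma val_PL_join x y : PL_join x y = maxn x y :> nat.
Proof. by rewrite val_inord // geq_max !leq_ord. Qed.

Lemma val_PL_odot x y : PL_odot x y = x + y - n :> nat.
Proof. by rewrite val_inord // leq_subLR leq_add ?leq_ord. Qed.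

Lemma val_PL_oplus x y : PL_oplus x y = minn n (x + y) :> nat.
Proof. by rewrite val_inord // geq_minl. Qed.
End Operations.

Definition multiples (n l : nat) : {set 'I_n.+1} := [set i : 'I_n.+1 | l %| i].

Lemma in_multiples n l (i : 'I_n.+1) : (i \in multiples n l) = (l %| i).
Proof. by rewrite inE. Qed.

Lemma multiples_subuniverse n l : l %| n -> PL_subuniverse (multiples n l).
Proof.
move=> l_dvd_n; split; rewrite ?in_multiples ?dvdn0 // => x y.
rewrite !in_multiples val_PL_meet val_PL_join val_PL_odot val_PL_oplus.
move=> l_dvd_x l_dvd_y; split.
- by rewrite /minn; case: ifP.
- by rewrite /maxn; case: ifP.
- by rewrite dvdn_sub // dvdn_add.
- by rewrite /minn; case: ifP; rewrite // dvdn_add.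
Qed.

Section Scaling.
Variables k l n : nat.
Hypothesis l_gt0 : 0 < l.
Hypothesis n_eq : n = k * l.

Definition scale (x : 'I_k.+1) : 'I_n.+1 := inord (x * l).

Lemma val_scale x : scale x = x * l :> nat.
Proof. by rewrite val_inord // n_eq leq_mul2r leq_ord orbT. Qed.

Lemma scale_hom : PL_hom scale.
Proof.
split; try apply: val_inj; rewrite /= ?val_scale ?n_eq // => x y.
split; apply: val_inj => /=;
  rewrite val_scale ?val_PL_meet ?val_PL_join ?val_PL_odot ?val_PL_oplus
          !val_scale ?n_eq.
- by rewrite minnMl.
- by rewrite maxnMl.
- by rewrite mulnBl mulnDl.
- by rewrite minnMl mulnDl.
Qed.

Lemma scale_inj : injective scale.
Proof.
move=> x y /(congr1 val) /=; rewrite !val_scale => /eqP.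
by rewrite eqn_mul2r eqn0Ngt l_gt0 => /eqP /val_inj.
Qed.

Lemma scale_image (y : 'I_n.+1) : y \in multiples n l <-> exists x, scale x = y.
Proof.
rewrite in_multiples; split => [/dvdnP [j y_eq] | [x <-]]; last first.
  by rewrite val_scale dvdn_mull.
have j_le_k : j <= k by rewrite -(leq_pmul2r l_gt0) -y_eq -n_eq leq_ord.
by exists (inord j); apply: val_inj => /=; rewrite val_scale val_inord.
Qed.

Lemma scale_iso : PL_iso_onto scale (multiples n l).
Proof. split; [exact: scale_hom | exact: scale_inj | exact: scale_image]. Qed.
End Scaling.

Section Subuniverse.
Context {n : nat} {S : {set 'I_n.+1}}.
Hypothesis S_sub : PL_subuniverse S.

Definition in_S (a : nat) : bool := (inord a : 'I_n.+1) \in S.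

Lemma in_S_val (i : 'I_n.+1) : in_S i = (i \in S).
Proof. by rewrite /in_S inord_val. Qed.

Lemma in_S0 : in_S 0.
Proof.
case: S_sub => S0 _ _; rewrite -[0]/(nat_of_ord (PL_zero n)).
by rewrite in_S_val.
Qed.

Lemma in_Sn : in_S n.
Proof.
case: S_sub => _ Sn _; rewrite -[n]/(nat_of_ord (PL_one n)).
by rewrite in_S_val.
Qed.

Lemma in_S_add {a b} : in_S a -> in_S b -> a + b <= n -> in_S (a + b).
Proof.
move=> Sa Sb ab_le_n; case: S_sub => _ _ /(_ _ _ Sa Sb) [_ _ _].
rewrite -in_S_val val_PL_oplus !val_inord ?(minn_idPr ab_le_n) //.
- exact: leq_trans (leq_addl _ _) ab_le_n.
- exact: leq_trans (leq_addr _ _) ab_le_n.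
Qed.

Lemma in_S_odot {a b} : in_S a -> in_S b -> a <= n -> b <= n -> in_S (a + b - n).
Proof.
move=> Sa Sb a_le_n b_le_n; case: S_sub => _ _ /(_ _ _ Sa Sb) [_ _ + _].
by rewrite -in_S_val val_PL_odot !val_inord.
Qed.

Lemma in_S_mul {a j} : in_S a -> j * a <= n -> in_S (j * a).
Proof.
move=> Sa; elim: j => [|j IHj] ja_le_n; first exact: in_S0.
rewrite mulSn in_S_add // ?IHj // -?mulSn //.
by apply: leq_trans ja_le_n; rewrite mulSn leq_addl.
Qed.

Hypothesis n_gt0 : 0 < n.

Lemma exists_pos_in_S : exists j, (0 < j <= n) && in_S j.
Proof. by exists n; rewrite n_gt0 leqnn in_Sn. Qed.

Definition step : nat := ex_minn exists_pos_in_S.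

Lemma step_spec :
  [/\ 0 < step, step <= n, in_S step &
      forall a, in_S a -> a < step -> a = 0].
Proof.
rewrite /step; case: ex_minnP => l /andP [/andP [l_gt0 l_le_n] Sl] l_min.
split=> // a Sa a_lt_l; apply/eqP; rewrite eqn0Ngt; apply/negP => a_gt0.
have := l_min a; rewrite a_gt0 Sa (leq_trans (ltnW a_lt_l) l_le_n).
by move=> /(_ isT); rewrite leqNgt a_lt_l.
Qed.

Lemma mod_step_in_S a : in_S (a %% step) -> a %% step = 0.
Proof.
case: step_spec => step_gt0 _ _ step_min Sr.
by apply: (step_min _ Sr); rewrite ltn_mod.
Qed.

(* Adding [step] to the largest multiple of [step] below n overflows by
   [step - n %% step]; minimality of [step] forces [n %% step = 0]. *)
Lemma step_dvd_n : step %| n.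
Proof.
case: step_spec => step_gt0 step_le_n Sstep step_min.
set q := n %/ step; set r := n %% step.
have n_eq : n = q * step + r := divn_eq n step.
have r_lt : r < step by rewrite ltn_mod.
have q_le_n : q * step <= n by rewrite leq_divM.
have S_gap : in_S (step - r).
  have := in_S_odot (in_S_mul Sstep q_le_n) Sstep q_le_n step_le_n.
  by have -> : q * step + step - n = step - r by lia.
rewrite /dvdn -/r; apply/eqP; case: (posnP r) => // r_gt0.
by have := step_min _ S_gap; lia.
Qed.

(* Subtracting from [a] the complement of the largest multiple of [step]
   below [a] yields [a %% step], which must then vanish. *)
Lemma step_dvd_in_S a : a <= n -> in_S a -> step %| a.
Proof.
move=> a_le_n Sa; case: step_spec => step_gt0 _ Sstep _.
set q := n %/ step; set p := a %/ step.
have n_eq : n = q * step by rewrite divnK // step_dvd_n.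
have p_le_q : p <= q by rewrite leq_div2r.
have c_le_n : (q - p) * step <= n by rewrite mulnBl -n_eq leq_subr.
have S_diff := in_S_odot Sa (in_S_mul Sstep c_le_n) a_le_n c_le_n.
have a_eq := divn_eq a step; have r_lt := ltn_mod a step.
have diff_eq : a + (q - p) * step - n = a %% step.
  rewrite mulnBl -n_eq; have : p * step <= n by rewrite n_eq leq_mul2r p_le_q orbT.
  lia.
rewrite diff_eq in S_diff.
by rewrite /dvdn mod_step_in_S.
Qed.

Lemma subuniverse_multiples : S = multiples n step.
Proof.
case: step_spec => _ _ Sstep _.
apply/setP => i; rewrite in_multiples -in_S_val.
have i_le_n : i <= n := leq_ord i.
apply/idP/idP => [|/dvdnP [j i_eq]]; first exact: step_dvd_in_S.
by rewrite i_eq in_S_mul // -i_eq.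
Qed.
End Subuniverse.

Lemma Pk_multiples n k : Pk n k = multiples n (n %/ k).
Proof. by []. Qed.

Lemma complement_divisor {n d} : 0 < n -> d %| n ->
  [/\ 0 < n %/ d, n %/ d %| n & n %/ (n %/ d) = d].
Proof.
move=> n_gt0 d_dvd_n; have d_gt0 : 0 < d by apply: dvdn_gt0 n_gt0 d_dvd_n.
split; first by rewrite divn_gt0 // dvdn_leq.
- exact: dvdn_div.
- by rewrite divnA // mulKn.
Qed.

Lemma complement_dvdn n k k' : 0 < n -> k %| n -> k' %| n ->
  (n %/ k' %| n %/ k) = (k %| k').
Proof.
move=> n_gt0 k_dvd_n k'_dvd_n.
have [l_gt0 _ _] := complement_divisor n_gt0 k_dvd_n.
have k'_gt0 : 0 < k' by apply: dvdn_gt0 n_gt0 k'_dvd_n.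
rewrite dvdn_divLR // -{1}(divnK k_dvd_n) mulnC [n %/ k * k']mulnC.
by rewrite dvdn_pmul2r.
Qed.

Lemma multiples_subset n l l' : l <= n ->
  (multiples n l \subset multiples n l') = (l' %| l).
Proof.
move=> l_le_n; apply/subsetP/idP => [sub_ll' | l'_dvd_l i].
  by have := sub_ll' (inord l); rewrite !in_multiples val_inord // dvdnn; apply.
by rewrite !in_multiples => /(dvdn_trans l'_dvd_l).
Qed.

Theorem proposition3p2 (n : nat) (hn : 0 < n) :
  [/\ (* the subuniverses are exactly the P_k, k * l = n *)
      (forall S : {set 'I_n.+1},
         PL_subuniverse S <-> exists k, [/\ 0 < k, k %| n & S = Pk n k]),
      (* each P_k is (the universe of) a subalgebra isomorphic to PL_k *)
      (forall k, 0 < k -> k %| n ->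
         exists f : 'I_k.+1 -> 'I_n.+1, PL_iso_onto f (Pk n k)) &
      (* k |-> P_k is an order isomorphism (divisibility vs inclusion),
         hence a lattice isomorphism from divisors of n to subalgebras *)
      (forall k k', 0 < k -> 0 < k' -> k %| n -> k' %| n ->
         (Pk n k \subset Pk n k') = (k %| k'))].
Proof.
split.
- move=> S; split => [S_sub | [k [_ k_dvd_n ->]]]; last first.
    by rewrite Pk_multiples; apply/multiples_subuniverse/dvdn_div.
  have [k_gt0 k_dvd_n l_eq] := complement_divisor hn (step_dvd_n S_sub hn).
  exists (n %/ step S_sub hn); split => //.
  by rewrite Pk_multiples l_eq; apply: subuniverse_multiples.
- move=> k _ k_dvd_n; exists (scale k (n %/ k) n).
  have [l_gt0 _ _] := complement_divisor hn k_dvd_n.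
  by apply: scale_iso; rewrite // mulnC divnK.
- move=> k k' _ _ k_dvd_n k'_dvd_n.
  rewrite !Pk_multiples multiples_subset ?leq_div //.
  exact: complement_dvdn.
Qed.
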